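(* Let $n\geq 3$ and $m\geq 3$ be integers and $Q(z)=\sum_{i=0}^{m}\binom{m}{i}\frac{(-1)^{i}}{n+m+1-i} z^{n+m+1-i}$, $P(z)=Q(z)+1$. Then $Q(1)$ is not an integer. In particular, $P(1)\neq -1$. *)

From HB Require Import structures.
From mathcomp Require Import all_boot all_order all_algebra.
Set Implicit Arguments. Unset Strict Implicit. Unset Printing Implicit Defensive.
Import Order.TTheory GRing.Theory Num.Theory.
Local Open Scope ring_scope.

Definition Qpoly (n m : nat) : {poly rat} :=
  \sum_(i < m.+1)
     ((('C(m, i))%:R * (-1) ^+ i / ((n + m + 1 - i)%N)%:R) *: 'X^(n + m + 1 - i)).

Definition Ppoly (n m : nat) : {poly rat} := Qpoly n m + 1.

From HB Require Import structures.
From mathcomp Require Import all_boot all_order all_algebra.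
From mathcomp Require Import ring zify.
Import Order.TTheory GRing.Theory Num.Theory.
Local Open Scope ring_scope.

(* After the reindexing i = m - k, Q(1) is (-1)^m times the alternating binomial
   sum of C(m,k) (-1)^k / (n+k+1), which is the Beta integral
   int_0^1 t^n (1-t)^m dt = n! m! / (n+m+1)!.  Both sides satisfy the recursion
   f(n, m+1) = f(n, m) - f(n+1, m) (split (1-t)^(m+1) = (1-t)^m - t (1-t)^m), and
   agree at m = 0.  For n + m >= 1 this value lies strictly between 0 and 1, so Q(1)
   is not an integer; P(1) = -1 would make Q(1) = -2. *)

Definition alt_binom_sum (n m : nat) : rat :=
  \sum_(k < m.+1) 'C(m, k)%:R * (-1) ^+ k / (n + k).+1%:R.

Definition beta_fact (n m : nat) : rat := (n`! * m`!)%:R / (n + m).+1`!%:R.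

Lemma alt_binom_sumS n m :
  alt_binom_sum n m.+1 = alt_binom_sum n m - alt_binom_sum n.+1 m.
Proof.
rewrite /alt_binom_sum big_ord_recl [in RHS]big_ord_recl /= !bin0 addn0.
have pascal (k : 'I_m.+1) :
    'C(m.+1, bump 0 k)%:R * (-1) ^+ bump 0 k / (n + bump 0 k).+1%:R =
    'C(m, k.+1)%:R * (-1) ^+ k.+1 / (n + k.+1).+1%:R
    - 'C(m, k)%:R * (-1) ^+ k / (n.+1 + k).+1%:R :> rat.
  by rewrite /bump /= add1n binS natrD exprS addSn !addnS; ring.
under eq_bigr do rewrite pascal.
rewrite sumrB big_ord_recr /= bin_small // !mul0r addr0.
ring.
Qed.

Lemma beta_factS n m : beta_fact n m.+1 = beta_fact n m - beta_fact n.+1 m.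
Proof.
rewrite /beta_fact addnS addSn !factS !natrM -!natr1 !natrD.
have fact_neq0 : (n + m)`!%:R != 0 :> rat by rewrite pnatr_eq0 -lt0n fact_gt0.
have nm1_neq0 : n%:R + m%:R + 1 != 0 :> rat by rewrite -natrD natr1 pnatr_eq0.
have nm2_neq0 : n%:R + m%:R + 1 + 1 != 0 :> rat by rewrite -natrD !natr1 pnatr_eq0.
by field; rewrite fact_neq0 nm1_neq0 nm2_neq0.
Qed.

Lemma alt_binom_sum_beta n m : alt_binom_sum n m = beta_fact n m.
Proof.
elim: m n => [|m IHm] n; last by rewrite alt_binom_sumS beta_factS !IHm.
rewrite /alt_binom_sum /beta_fact big_ord1 bin0 expr0 mul1r !addn0 factS fact0 !natrM.
have fact_neq0 : n`!%:R != 0 :> rat by rewrite pnatr_eq0 -lt0n fact_gt0.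
by field; rewrite fact_neq0 nat1r pnatr_eq0.
Qed.

Lemma horner_Qpoly1 n m : (Qpoly n m).[1] = (-1) ^+ m * beta_fact n m.
Proof.
rewrite -alt_binom_sum_beta /alt_binom_sum big_distrr /Qpoly horner_sum.
rewrite (reindex_inj rev_ord_inj) /=; apply: eq_bigr => k _.
rewrite hornerZ hornerXn expr1n mulr1 subSS.
have le_km : (k <= m)%N by rewrite -ltnS.
rewrite bin_sub //.
have -> : (n + m + 1 - (m - k) = (n + k).+1)%N by lia.
have sign_sq : (-1) ^+ k * (-1) ^+ k = 1 :> rat.
  by rewrite -expr2 -exprM mulnC exprM sqrrN expr1n.
have sign_m : (-1) ^+ m = (-1) ^+ (m - k) * (-1) ^+ k :> rat by rewrite -exprD subnK.
by rewrite sign_m -[LHS]mulr1 -[X in _ * X = _]sign_sq; ring.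
Qed.

Lemma fact_mul_leq_fact_add n m : (n`! * m`! <= (n + m)`!)%N.
Proof.
by rewrite -(bin_fact (leq_addr m n)) addKn leq_pmull // bin_gt0 leq_addr.
Qed.

Lemma beta_fact_gt0 n m : 0 < beta_fact n m.
Proof. by rewrite divr_gt0 ?ltr0n ?muln_gt0 ?fact_gt0. Qed.

Lemma beta_fact_lt1 n m : (0 < n + m)%N -> beta_fact n m < 1.
Proof.
move=> nm_gt0; rewrite ltr_pdivrMr ?ltr0n ?fact_gt0 // mul1r ltr_nat.
apply: leq_ltn_trans (fact_mul_leq_fact_add n m) _.
by rewrite factS -[X in (X < _)%N]mul1n ltn_pmul2r ?fact_gt0.
Qed.

Lemma horner_Qpoly1_not_int n m : (0 < n + m)%N -> (Qpoly n m).[1] \isn't a Num.int.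
Proof.
move=> nm_gt0; apply/negP => Q1_int.
have Q1_neq0 : (Qpoly n m).[1] != 0.
  by rewrite horner_Qpoly1 mulf_neq0 ?signr_eq0 ?gt_eqF ?beta_fact_gt0.
have := norm_intr_ge1 Q1_int Q1_neq0.
rewrite horner_Qpoly1 normrM normrX normrN normr1 expr1n mul1r.
by rewrite gtr0_norm ?beta_fact_gt0 // leNgt beta_fact_lt1.
Qed.

Theorem lemma2p4 (n m : nat) (hn : (3 <= n)%N) (hm : (3 <= m)%N) :
  ~ ((Qpoly n m).[1] \is a Num.int) /\ (Ppoly n m).[1] <> -1.
Proof.
have nm_gt0 : (0 < n + m)%N by lia.
have /negP Q1_not_int := horner_Qpoly1_not_int n m nm_gt0.
split=> // P1_eq; apply: Q1_not_int.
have -> : (Qpoly n m).[1] = -1 - 1.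
  by rewrite -{1}P1_eq /Ppoly hornerD hornerC addrK.
by rewrite rpredB ?rpredN ?intr_nat.
Qed.
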